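(* Let $k$ be a constant and let $D$ be the derivation (linear, satisfying the Leibniz rule, killing constants) on polynomials in the commuting variables $I,x,y,u$ determined by $D(I)=I(y+u)$, $D(x)=2kxy$, $D(y)=2kxy$, $D(u)=2kxy$. Then for $n\ge1$, $$D^n(I)=I\sum_{w\in B_n}x^{\mathrm{exc}(w)}y^{\mathrm{aexc}(w)}u^{\mathrm{fix}(w)}k^{n-\mathrm{cyc}(w)}.$$
   Context: $B_n$ is the hyperoctahedral group of signed permutations $w$ of $\pm[n]$ with $w(-i)=-w(i)$, written in standard cycle decomposition (each cycle starts with its element of largest absolute value, cycles ordered by increasing absolute value of first elements); $\mathrm{cyc}(w)$ is the number of cycles. For $i\in[n]$: $i$ is an excedance if $w(|w(i)|)>w(i)$; an anti-excedance if $w(i)=-i$ or $w(|w(i)|)<w(i)$; a fixed point if $w(i)=i$. $\mathrm{exc}(w)$, $\mathrm{aexc}(w)$, $\mathrm{fix}(w)$ denote their numbers. *)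

From HB Require Import structures.
From mathcomp Require Import all_boot all_order all_algebra all_fingroup.
From mathcomp Require Import mpoly.
Set Implicit Arguments. Unset Strict Implicit. Unset Printing Implicit Defensive.
Import GRing.Theory.
Local Open Scope ring_scope.

(* ---------- Signed permutations (hyperoctahedral group B_n) ----------
   A signed permutation w of ±[n] (w(-i) = -w(i)) is determined by its
   values on [n] = {1,...,n}; we encode it as a pair (s, e) where
   s : {perm 'I_n} is the underlying permutation |w| and e i = true iff
   w(i) is negative.  Element i : 'I_n stands for i+1 ∈ [n], so
   w(i+1) = (-1)^(e i) * (s i + 1). *)
Definition Bn (n : nat) : finType := ({perm 'I_n} * {ffun 'I_n -> bool})%type.

Definition sval n (w : Bn n) (i : 'I_n) : int :=
  if w.2 i then - ((w.1 i).+1)%:Z else ((w.1 i).+1)%:Z.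

Definition absw n (w : Bn n) (i : 'I_n) : 'I_n := w.1 i.

Definition is_exc n (w : Bn n) (i : 'I_n) : bool :=
  (sval w i < sval w (absw w i))%R.
Definition is_aexc n (w : Bn n) (i : 'I_n) : bool :=
  (sval w i == - (i.+1)%:Z) || (sval w (absw w i) < sval w i)%R.
Definition is_fix n (w : Bn n) (i : 'I_n) : bool :=
  sval w i == (i.+1)%:Z.

Definition exc n (w : Bn n) : nat := #|[pred i | is_exc w i]|.
Definition aexc n (w : Bn n) : nat := #|[pred i | is_aexc w i]|.
Definition fixB n (w : Bn n) : nat := #|[pred i | is_fix w i]|.
(* number of cycles in the standard cycle decomposition of w: each cycle of
   a signed permutation in that notation is a cycle of |w| on [n]
   (decorated with signs), so cyc(w) = number of cycles of |w|. *)
Definition cyc n (w : Bn n) : nat := #|porbits w.1|.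

Definition vI (R : comNzRingType) : {mpoly R[4]} := 'X_(inord 0).
Definition vx (R : comNzRingType) : {mpoly R[4]} := 'X_(inord 1).
Definition vy (R : comNzRingType) : {mpoly R[4]} := 'X_(inord 2).
Definition vu (R : comNzRingType) : {mpoly R[4]} := 'X_(inord 3).

Definition Dgen (R : comNzRingType) (k : R) (i : 'I_4) : {mpoly R[4]} :=
  match val i with
  | 0 => vI R * (vy R + vu R)
  | _ => k%:MP *+ 2 * vx R * vy R
  end.

(* the unique derivation (linear, Leibniz, killing constants) with the
   prescribed values on the generators: D p = sum_i D(v_i) * dp/dv_i *)
Definition Dder (R : comNzRingType) (k : R) (p : {mpoly R[4]}) : {mpoly R[4]} :=
  \sum_(i < 4) Dgen k i * mderiv i p.

From Pilot Require Import Defs.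
From HB Require Import structures.
From mathcomp Require Import all_boot all_order all_algebra all_fingroup.
From mathcomp Require Import mpoly.
From mathcomp Require Import ring zify.
Set Implicit Arguments. Unset Strict Implicit. Unset Printing Implicit Defensive.
Import GRing.Theory Order.TTheory.
Local Open Scope ring_scope.

(* Write D^n(I) = I F_n.  Since D(I) = I (y + u), the Leibniz rule gives
   F_(n+1) = (y + u) F_n + D(F_n) and F_0 = 1, so it suffices that the
   generating polynomial of B_n obeys this recurrence.  Each position of
   w in B_n is exactly one of an excedance, an anti-excedance or a fixed
   point, so the monomial of w is a product of n variables, each of
   derivative 2kxy.  Every element of B_(n+1) arises exactly once by inserting
   n+1, with a sign, into some w in B_n: either as a new fixed point, which
   adds a cycle and a factor y or u, giving (y + u) F_n; or right after some
   i in its cycle, which keeps the number of cycles and replaces the variable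
   of the position sent to i by xy.  Summed over both signs, and with the
   extra power of k, this is the derivative of that variable, giving D(F_n). *)

Section Derivation.
Variables (R : comNzRingType) (k : R).
Local Notation D := (Dder k).
Local Notation MP := {mpoly R[4]}.

Lemma Dder0 : D 0 = 0.
Proof. by rewrite /Dder big1 // => i _; rewrite mderiv0 mulr0. Qed.

Lemma DderD p q : D (p + q) = D p + D q.
Proof. by rewrite /Dder -big_split; apply: eq_bigr => i _; rewrite mderivD mulrDr. Qed.

Lemma DderM p q : D (p * q) = D p * q + p * D q.
Proof.
rewrite /Dder mulr_suml mulr_sumr -big_split; apply: eq_bigr => i _.
by rewrite mderivM /=; ring.
Qed.

Lemma DderC c : D c%:MP = 0.
Proof. by rewrite /Dder big1 // => i _; rewrite mderivC mulr0. Qed.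

Lemma Dder_sum (I : finType) (F : I -> MP) : D (\sum_i F i) = \sum_i D (F i).
Proof. exact: (big_morph D DderD Dder0). Qed.

Lemma Dder_prod m (F : 'I_m -> MP) :
  D (\prod_j F j) = \sum_j D (F j) * \prod_(l | l != j) F l.
Proof.
elim: m F => [|m IH] F; first by rewrite !big_ord0 -mpolyC1 DderC.
have neq_widen_max (j : 'I_m) : widen_ord (leqnSn m) j != ord_max.
  by rewrite -(inj_eq val_inj) /= neq_ltn ltn_ord.
rewrite big_ord_recr DderM IH [RHS]big_ord_recr /= mulr_suml; congr (_ + _).
  apply: eq_bigr => j _; rewrite -mulrA; congr (_ * _).
  rewrite [RHS]big_mkcond big_ord_recr /= eq_sym neq_widen_max big_mkcond.
  by congr (_ * _); apply: eq_bigr => l _; rewrite (inj_eq (@widen_ord_inj _ _ _)).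
rewrite mulrC; congr (_ * _).
rewrite [RHS]big_mkcond big_ord_recr /= eqxx mulr1.
by apply: eq_bigr => l _; rewrite neq_widen_max.
Qed.

Lemma mderiv_var (i j : 'I_4) : mderiv i ('X_j : MP) = (i == j)%:R.
Proof.
rewrite mderivX mnm1E eq_sym; case: eqP => [->|_]; last by rewrite scale0r.
have -> : (U_(j) - U_(j))%MM = 0%MM by apply/mnmP => l; rewrite mnmBE subnn mnm0E.
by rewrite mpolyX0 scale1r.
Qed.

Lemma Dder_var j : (j < 4)%N -> D 'X_(inord j) = Dgen k (inord j).
Proof.
move=> lt_j4; rewrite /Dder (bigD1 (inord j)) //= mderiv_var eqxx mulr1.
by rewrite big1 ?addr0 // => i /negbTE ne; rewrite mderiv_var ne mulr0.
Qed.

Lemma DvI : D (vI R) = vI R * (vy R + vu R).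
Proof. by rewrite /vI Dder_var // /Dgen /= inordK. Qed.
Lemma Dvx : D (vx R) = k%:MP *+ 2 * vx R * vy R.
Proof. by rewrite /vx Dder_var // /Dgen /= inordK. Qed.
Lemma Dvy : D (vy R) = k%:MP *+ 2 * vx R * vy R.
Proof. by rewrite /vy Dder_var // /Dgen /= inordK. Qed.
Lemma Dvu : D (vu R) = k%:MP *+ 2 * vx R * vy R.
Proof. by rewrite /vu Dder_var // /Dgen /= inordK. Qed.

End Derivation.

Local Notation svalB := Pilot.Defs.sval.

Section PositionMonomials.
Variable R : comNzRingType.
Local Notation MP := {mpoly R[4]}.

(* [a = w(j)] and [b = w(|w(j)|)]; [a = b] forces [|w(j)| = j], i.e. [w(j) = ±j]. *)
Definition step_mono (a b : int) : MP :=
  if a < b then vx R else if b < a then vy R else if a < 0 then vy R else vu R.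

Definition pos_mono n (w : Bn n) j : MP := step_mono (svalB w j) (svalB w (absw w j)).

Definition Bmono n (w : Bn n) : MP :=
  vx R ^+ exc w * vy R ^+ aexc w * vu R ^+ fixB w.

Lemma sval_inj n (w : Bn n) : injective (svalB w).
Proof.
move=> i j eq_ij; apply: (@perm_inj _ w.1); apply: val_inj; move: eq_ij.
by rewrite /Defs.sval; case: (w.2 i); case: (w.2 j) => /=; lia.
Qed.

Lemma sval_range n (w : Bn n) j : - (n.+1)%:Z < svalB w j < (n.+1)%:Z.
Proof. by rewrite /Defs.sval; have := ltn_ord (w.1 j); case: (w.2 j); lia. Qed.

Lemma sval_absw_fixed n (w : Bn n) j :
  absw w j = j -> svalB w j = if w.2 j then - (j.+1)%:Z else (j.+1)%:Z.
Proof. by rewrite /Defs.sval /absw => ->. Qed.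

Lemma absw_fixed_sval n (w : Bn n) j :
  (svalB w j == (j.+1)%:Z) || (svalB w j == - (j.+1)%:Z) -> absw w j = j.
Proof. by rewrite /Defs.sval /absw => h; apply: val_inj; move: h; case: (w.2 j) => /=; lia. Qed.

Lemma pos_monoE n (w : Bn n) j :
  pos_mono w j = vx R ^+ is_exc w j * vy R ^+ is_aexc w j * vu R ^+ is_fix w j.
Proof.
rewrite /pos_mono /step_mono /is_exc /is_aexc /is_fix.
have [fix_j|nfix_j] := eqVneq (absw w j) j.
  rewrite fix_j ltxx sval_absw_fixed //; case: (w.2 j) => /=.
    by rewrite eqxx /= expr0 expr1 mul1r mulr1.
  by rewrite eqxx expr0 expr1 !mul1r.
have neq_next : svalB w j != svalB w (absw w j).
  by apply: contra nfix_j => /eqP /sval_inj <-.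
have [neq_pos neq_neg] : (svalB w j == (j.+1)%:Z) = false /\ (svalB w j == - (j.+1)%:Z) = false.
  by split; apply/negbTE; apply: contra nfix_j => h; apply/eqP/absw_fixed_sval; rewrite h ?orbT.
rewrite neq_pos neq_neg /=; case: ltgtP neq_next => //= _ _; rewrite ?expr0 ?expr1; ring.
Qed.

Lemma Bmono_prod n (w : Bn n) : Bmono w = \prod_j pos_mono w j.
Proof.
rewrite (eq_bigr _ (fun j _ => pos_monoE w j)) !big_split /= !prodrXr.
have card_pred (P : pred 'I_n) : \sum_j (P j : nat) = #|[pred j | P j]|.
  by rewrite -sum1_card [RHS]big_mkcond; apply: eq_bigr => j _; rewrite inE; case: (P j).
by rewrite /Bmono /exc /aexc /fixB !card_pred.
Qed.

End PositionMonomials.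

Lemma big_ord_recr_lift (T : Type) (idx : T) (op : Monoid.law idx) n
    (F : 'I_n.+1 -> T) :
  \big[op/idx]_(j < n.+1) F j =
  op (\big[op/idx]_(j < n) F (lift ord_max j)) (F ord_max).
Proof.
rewrite big_ord_recr; congr (op _ _); apply: eq_bigr => j _; congr F.
by apply: val_inj; rewrite [RHS]lift_max.
Qed.

Lemma lift_max_neq n (j : 'I_n) : lift ord_max j != ord_max.
Proof. by rewrite eq_sym neq_lift. Qed.

Definition lift_top n (s : {perm 'I_n}) : {perm 'I_n.+1} := lift_perm ord_max ord_max s.

Definition ext_sign n (e : {ffun 'I_n -> bool}) (j : 'I_n.+1) : bool :=
  if unlift ord_max j is Some j' then e j' else false.

(* [Binsert w i b] inserts the letter [n+1] into [w] right after [i] in its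
   cycle, with sign [b]; the image of [i] and its sign pass on to [n+1].
   For [i = n+1] this creates the signed fixed point [(-1)^b (n+1)]. *)
Definition Binsert n (w : Bn n) (i : 'I_n.+1) (b : bool) : Bn n.+1 :=
  ((tperm i ord_max * lift_top w.1)%g,
   [ffun j => if j == i then b else ext_sign w.2 (if j == ord_max then i else j)]).

Lemma ext_sign_lift n (e : {ffun 'I_n -> bool}) j : ext_sign e (lift ord_max j) = e j.
Proof. by rewrite /ext_sign liftK. Qed.

Section Insertion.
Variables (R : comNzRingType) (n : nat) (w : Bn n) (b : bool).
Local Notation MP := {mpoly R[4]}.

Lemma Binsert_lift i j : lift ord_max j != i ->
  (Binsert w i b).1 (lift ord_max j) = lift ord_max (w.1 j).
Proof.
move=> neq_ji; rewrite permM tpermD ?lift_perm_lift // 1?eq_sym //.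
exact: lift_max_neq.
Qed.

Lemma Binsert_at i : (Binsert w i b).1 i = ord_max.
Proof. by rewrite permM tpermL lift_perm_id. Qed.

Lemma Binsert_max (i0 : 'I_n) :
  (Binsert w (lift ord_max i0) b).1 ord_max = lift ord_max (w.1 i0).
Proof. by rewrite permM tpermR lift_perm_lift. Qed.

Lemma sval_Binsert_lift i j : lift ord_max j != i ->
  svalB (Binsert w i b) (lift ord_max j) = svalB w j.
Proof.
move=> neq_ji; rewrite /Defs.sval Binsert_lift // ffunE (negbTE neq_ji).
by rewrite (negbTE (lift_max_neq j)) ext_sign_lift lift_max.
Qed.

Lemma sval_Binsert_at i :
  svalB (Binsert w i b) i = if b then - (n.+1)%:Z else (n.+1)%:Z.
Proof. by rewrite /Defs.sval Binsert_at ffunE eqxx. Qed.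

Lemma sval_Binsert_max (i0 : 'I_n) :
  svalB (Binsert w (lift ord_max i0) b) ord_max = svalB w i0.
Proof.
rewrite /Defs.sval Binsert_max ffunE eq_sym (negbTE (lift_max_neq i0)) eqxx.
by rewrite ext_sign_lift lift_max.
Qed.

Definition to_top_mono : MP := if b then vy R else vx R.
Definition from_top_mono : MP := if b then vx R else vy R.

Lemma step_mono_to_top a : - (n.+1)%:Z < a < (n.+1)%:Z ->
  step_mono R a (if b then - (n.+1)%:Z else (n.+1)%:Z) = to_top_mono.
Proof.
move=> a_range; rewrite /step_mono /to_top_mono; case: b.
  by rewrite ifF ?ifT //; lia.
by rewrite ifT //; lia.
Qed.

Lemma step_mono_from_top a : - (n.+1)%:Z < a < (n.+1)%:Z ->
  step_mono R (if b then - (n.+1)%:Z else (n.+1)%:Z) a = from_top_mono.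
Proof.
move=> a_range; rewrite /step_mono /from_top_mono; case: b.
  by rewrite ifT //; lia.
by rewrite ifF ?ifT //; lia.
Qed.

Lemma pos_mono_Binsert_lift i j : lift ord_max j != i ->
  pos_mono R (Binsert w i b) (lift ord_max j) =
  if lift ord_max (w.1 j) == i then to_top_mono else pos_mono R w j.
Proof.
move=> neq_ji; rewrite /pos_mono /absw Binsert_lift // sval_Binsert_lift //.
case: eqP => [->|/eqP neq]; first by rewrite sval_Binsert_at step_mono_to_top ?sval_range.
by rewrite sval_Binsert_lift.
Qed.

Lemma pos_mono_Binsert_at (i0 : 'I_n) :
  pos_mono R (Binsert w (lift ord_max i0) b) (lift ord_max i0) = from_top_mono.
Proof.
rewrite /pos_mono /absw Binsert_at sval_Binsert_at sval_Binsert_max.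
by rewrite step_mono_from_top ?sval_range.
Qed.

Lemma pos_mono_Binsert_max (i0 : 'I_n) :
  pos_mono R (Binsert w (lift ord_max i0) b) ord_max =
  if w.1 i0 == i0 then to_top_mono else pos_mono R w i0.
Proof.
rewrite /pos_mono /absw Binsert_max sval_Binsert_max.
have [fix_i0|nfix_i0] := eqVneq (w.1 i0) i0.
  by rewrite fix_i0 sval_Binsert_at step_mono_to_top ?sval_range.
by rewrite sval_Binsert_lift // (inj_eq (@lift_inj _ ord_max)).
Qed.

Lemma pos_mono_Binsert_fixed :
  pos_mono R (Binsert w ord_max b) ord_max = if b then vy R else vu R.
Proof.
rewrite /pos_mono /absw Binsert_at sval_Binsert_at /step_mono ltxx.
by case: b; rewrite // ifT //; lia.
Qed.

Lemma Bmono_Binsert_fixed :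
  Bmono R (Binsert w ord_max b) = (if b then vy R else vu R) * Bmono R w.
Proof.
rewrite !Bmono_prod big_ord_recr_lift /= pos_mono_Binsert_fixed mulrC; congr (_ * _).
apply: eq_bigr => j _.
by rewrite pos_mono_Binsert_lift ?lift_max_neq // (negbTE (lift_max_neq _)).
Qed.

(* The variable of [i0] moves to the new letter, [i0] itself gets
   [from_top_mono], and the position mapped to [i0] gets [to_top_mono]. *)
Lemma Bmono_Binsert_lift (i0 : 'I_n) :
  Bmono R (Binsert w (lift ord_max i0) b) =
  vx R * vy R * \prod_(j | j != (w.1^-1)%g i0) pos_mono R w j.
Proof.
set p := (w.1^-1)%g i0.
pose f j := if j == p then to_top_mono else pos_mono R w j.
have to_i0 j : (w.1 j == i0) = (j == p) by rewrite (canF_eq (permK w.1)).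
rewrite Bmono_prod big_ord_recr_lift /= pos_mono_Binsert_max to_i0 -/(f i0).
rewrite (bigD1 i0) //= pos_mono_Binsert_at.
rewrite (eq_bigr f) => [|j neq_j]; last first.
  by rewrite pos_mono_Binsert_lift ?(inj_eq (@lift_inj _ ord_max)) // to_i0.
have split_i0 : \prod_j f j = f i0 * \prod_(j | j != i0) f j by rewrite (bigD1 i0).
have split_p : \prod_j f j = to_top_mono * \prod_(j | j != p) pos_mono R w j.
  rewrite (bigD1 p) // /f eqxx; congr (_ * _).
  by apply: eq_bigr => j /negbTE ->.
apply: (etrans (y := from_top_mono * (f i0 * \prod_(j | j != i0) f j))); first by ring.
rewrite -split_i0 split_p mulrA; congr (_ * _).
by rewrite /to_top_mono /from_top_mono; case: b; rewrite // mulrC.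
Qed.

End Insertion.

Section CyclesLiftTop.
Variables (n : nat) (s : {perm 'I_n}).

Lemma lift_top_expg_max m : ((lift_top s) ^+ m)%g ord_max = ord_max.
Proof. by elim: m => [|m IH]; rewrite ?expg0 ?perm1 // expgSr permM IH lift_perm_id. Qed.

Lemma lift_top_expg_lift m j :
  ((lift_top s) ^+ m)%g (lift ord_max j) = lift ord_max ((s ^+ m)%g j).
Proof.
elim: m => [|m IH]; first by rewrite !expg0 !perm1.
by rewrite !expgSr !permM IH lift_perm_lift.
Qed.

Lemma porbit_lift_top_max : porbit (lift_top s) ord_max = [set ord_max].
Proof.
apply/setP => x; rewrite inE; apply/porbitP/eqP => [[m ->]|->].
  exact: lift_top_expg_max.
by exists 0%N; rewrite expg0 perm1.
Qed.

Lemma porbit_lift_top_lift j :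
  porbit (lift_top s) (lift ord_max j) = lift ord_max @: porbit s j.
Proof.
apply/setP => x; apply/porbitP/imsetP => [[m ->]|[y /porbitP [m ->] ->]].
  by exists ((s ^+ m)%g j); [exact: mem_porbit | exact: lift_top_expg_lift].
by exists m; rewrite lift_top_expg_lift.
Qed.

Lemma porbits_lift_top :
  porbits (lift_top s) =
  [set ord_max] |: [set lift ord_max @: O | O : {set 'I_n} in porbits s].
Proof.
apply/setP => O; rewrite !inE; apply/imsetP/orP.
  case=> x _ ->; case: (unliftP ord_max x) => [j ->|->].
    by right; apply/imsetP; exists (porbit s j); [exact: imset_f | exact: porbit_lift_top_lift].
  by left; rewrite porbit_lift_top_max.
case=> [/eqP ->|/imsetP [O' /imsetP [j _ ->] ->]].
  by exists ord_max => //; rewrite porbit_lift_top_max.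
by exists (lift ord_max j) => //; rewrite porbit_lift_top_lift.
Qed.

Lemma card_porbits_lift_top : #|porbits (lift_top s)| = #|porbits s|.+1.
Proof.
rewrite porbits_lift_top cardsU1 card_imset; last exact/imset_inj/lift_inj.
suff -> : [set ord_max] \notin [set lift ord_max @: O | O : {set 'I_n} in porbits s] by [].
apply/imsetP => [[O _ max_in]].
have : ord_max \in [set (ord_max : 'I_n.+1)] by rewrite inE.
by rewrite max_in => /imsetP [y _ /eqP]; apply/negP; exact: neq_lift.
Qed.

End CyclesLiftTop.

Lemma cyc_le n (w : Bn n) : (cyc w <= n)%N.
Proof. by rewrite /cyc /porbits (leq_trans (leq_imset_card _ _)) ?card_ord. Qed.

Lemma cyc_Binsert_fixed n (w : Bn n) b : cyc (Binsert w ord_max b) = (cyc w).+1.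
Proof. by rewrite /cyc /= tperm1 mul1g card_porbits_lift_top. Qed.

(* The transposition joins the fixed point [n+1] of [lift_top w.1] to the cycle of [i0]. *)
Lemma cyc_Binsert_lift n (w : Bn n) b (i0 : 'I_n) :
  cyc (Binsert w (lift ord_max i0) b) = cyc w.
Proof.
have := porbits_mul_tperm (lift_top w.1) (lift ord_max i0) ord_max.
rewrite /= porbit_lift_top_max card_porbits_lift_top inE (negbTE (lift_max_neq i0)).
by rewrite /cyc /= addn1 addn2 => -[].
Qed.

Definition Binsert_triple n (x : Bn n * 'I_n.+1 * bool) : Bn n.+1 := Binsert x.1.1 x.1.2 x.2.

Lemma Binsert_triple_inj n : injective (@Binsert_triple n).
Proof.
move=> [[[s1 e1] i1] b1] [[[s2 e2] i2] b2]; rewrite /Binsert_triple /Binsert /= => -[eq_s eq_e].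
have eq_i : i1 = i2.
  apply: (@perm_inj _ (tperm i2 ord_max * lift_top s2)%g).
  by rewrite -{1}eq_s !permM !tpermL !lift_perm_id.
subst i2.
have eq_s' : s1 = s2.
  have eq_L : lift_top s1 = lift_top s2 by apply: (mulgI (tperm i1 ord_max)).
  apply/permP => j; have := congr1 (fun t : {perm _} => t (lift ord_max j)) eq_L.
  by rewrite /= !lift_perm_lift => /lift_inj.
have sign_at j := congr1 (fun e : {ffun _ -> bool} => e j) eq_e.
have eq_b : b1 = b2 by have := sign_at i1; rewrite /= !ffunE eqxx.
have eq_e' : e1 = e2.
  apply/ffunP => j; have [ji1|/negbTE nji1] := eqVneq (lift ord_max j) i1.
    have := sign_at ord_max; rewrite /= !ffunE eqxx -ji1 eq_sym (negbTE (lift_max_neq j)).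
    by rewrite !ext_sign_lift.
  have := sign_at (lift ord_max j); rewrite /= !ffunE nji1 (negbTE (lift_max_neq j)).
  by rewrite !ext_sign_lift.
by rewrite eq_s' eq_e' eq_b.
Qed.

Lemma Binsert_triple_bij n : bijective (@Binsert_triple n).
Proof.
apply: inj_card_bij; first exact: Binsert_triple_inj.
rewrite /Bn !card_prod !card_Sn !card_ffun card_bool !card_ord factS expnS.
by apply: eq_leq; ring.
Qed.

Section GeneratingPolynomial.
Variables (R : comNzRingType) (k : R).
Local Notation D := (Dder k).
Local Notation MP := {mpoly R[4]}.

Definition Bterm n (w : Bn n) : MP := Bmono R w * (k ^+ (n - cyc w))%:MP.

Definition Bpoly n : MP := \sum_(w : Bn n) Bterm w.

Lemma Dder_pos_mono n (w : Bn n) j : D (pos_mono R w j) = k%:MP *+ 2 * vx R * vy R.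
Proof. by rewrite /pos_mono /step_mono; repeat case: ifP => _; rewrite ?Dvx ?Dvy ?Dvu. Qed.

Lemma Dder_Bmono n (w : Bn n) :
  D (Bmono R w) = \sum_j k%:MP *+ 2 * vx R * vy R * \prod_(l | l != j) pos_mono R w l.
Proof. by rewrite Bmono_prod Dder_prod; apply: eq_bigr => j _; rewrite Dder_pos_mono. Qed.

Lemma sum_Bterm_Binsert_fixed n (w : Bn n) :
  \sum_b Bterm (Binsert w ord_max b) = (vy R + vu R) * Bterm w.
Proof.
rewrite big_bool /Bterm !Bmono_Binsert_fixed !cyc_Binsert_fixed !subSS /=.
by rewrite mulrDl !mulrA.
Qed.

Lemma sum_Bterm_Binsert_lift n (w : Bn n) :
  \sum_(i0 : 'I_n) \sum_b Bterm (Binsert w (lift ord_max i0) b) = D (Bterm w).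
Proof.
rewrite /Bterm DderM DderC mulr0 addr0 Dder_Bmono mulr_suml.
rewrite (reindex_inj (@perm_inj _ w.1)); apply: eq_bigr => j _.
rewrite big_bool /= !Bmono_Binsert_lift !cyc_Binsert_lift permK.
rewrite subSn ?cyc_le // exprS mpolyCM.
move: (k%:MP) (\prod_(l | l != j) pos_mono R w l) ((k ^+ (n - cyc w))%:MP) => a P c.
by rewrite mulr2n; ring.
Qed.

Lemma Bpoly_rec n : Bpoly n.+1 = (vy R + vu R) * Bpoly n + D (Bpoly n).
Proof.
rewrite /Bpoly Dder_sum mulr_sumr -big_split /=.
rewrite (reindex (@Binsert_triple n)) /Binsert_triple /=; last exact/onW_bij/Binsert_triple_bij.
rewrite -(pair_bigA _ (fun x b => Bterm (Binsert x.1 x.2 b))) /=.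
rewrite -(pair_bigA _ (fun w i => \sum_b Bterm (Binsert w i b))) /=.
apply: eq_bigr => w _.
by rewrite big_ord_recr_lift /= (sum_Bterm_Binsert_fixed w) (sum_Bterm_Binsert_lift w) addrC.
Qed.

Lemma Bpoly0 : Bpoly 0 = 1.
Proof.
rewrite /Bpoly (eq_bigr (fun _ => 1)) => [|w _]; last first.
  by rewrite /Bterm Bmono_prod big_ord0 sub0n expr0 mpolyC1 mulr1.
by rewrite sumr_const /Bn card_prod card_Sn card_ffun card_ord.
Qed.

Lemma iter_Dder_vI n : iter n D (vI R) = vI R * Bpoly n.
Proof.
elim: n => [|n IH]; first by rewrite Bpoly0 mulr1.
by rewrite iterS IH DderM DvI Bpoly_rec -mulrA -mulrDr.
Qed.

End GeneratingPolynomial.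

(* The identity also holds for [n = 0]. *)
Theorem lemma11 (R : comNzRingType) (k : R) (n : nat) : (1 <= n)%N ->
  iter n (Dder k) (vI R) =
  vI R * \sum_(w : Bn n)
     (vx R ^+ exc w * vy R ^+ aexc w * vu R ^+ fixB w * (k ^+ (n - cyc w))%:MP).
Proof. by move=> _; exact: iter_Dder_vI. Qed.
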